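(* There exists a countable group $G$ with the following two properties: \begin{itemize} \item for every $m \geq 1$ and every $w \in F_m \setminus [F_m, F_m]$, the word map $w \colon G^m \to G$ is surjective; \item the real vector space $\operatorname{Q}(G)/\operatorname{Hom}(G)$ is infinite-dimensional. \end{itemize}
   Context: $F_m$ denotes the free group of rank $m$ with basis $x_1,\dots,x_m$. An element $w \in F_m$ defines a word map $w \colon G^m \to G$ by substituting $x_i \mapsto g_i$ for $(g_1,\dots,g_m)\in G^m$. A quasimorphism on $G$ is a function $\varphi\colon G\to\mathbb{R}$ with finite defect $D(\varphi)=\sup_{g,h\in G}|\varphi(g)+\varphi(h)-\varphi(gh)|$; it is homogeneous if $\varphi(g^n)=n\varphi(g)$ for all $g\in G$, $n\in\mathbb{Z}$. $\operatorname{Q}(G)$ is the real vector space of homogeneous quasimorphisms on $G$ and $\operatorname{Hom}(G)$ the subspace of homomorphisms $G\to\mathbb{R}$. *)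

From Stdlib Require Import Reals List Arith ZArith.
Import ListNotations.
Open Scope R_scope.

Record Group := {
  carrier :> Type;
  gmul : carrier -> carrier -> carrier;
  ginv : carrier -> carrier;
  gone : carrier;
  gmul_assoc : forall x y z, gmul x (gmul y z) = gmul (gmul x y) z;
  gmul_1l : forall x, gmul gone x = x;
  gmul_1r : forall x, gmul x gone = x;
  gmul_Vl : forall x, gmul (ginv x) x = gone;
  gmul_Vr : forall x, gmul x (ginv x) = gone }.

Definition countable_group (G : Group) : Prop :=
  exists f : G -> nat, forall x y, f x = f y -> x = y.

(** Words in the free group F_m on x_0,...,x_{m-1}: a letter (i, b) stands for
    x_i if b = true and x_i^{-1} if b = false. *)
Definition letter := (nat * bool)%type.
Definition word := list letter.

Definition word_in (m : nat) (w : word) : Prop :=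
  Forall (fun l : letter => (fst l < m)%nat) w.

Definition linv (l : letter) : letter := (fst l, negb (snd l)).
Definition winv (w : word) : word := rev (map linv w).

Inductive free_eq : word -> word -> Prop :=
| fe_refl : forall w, free_eq w w
| fe_sym : forall u v, free_eq u v -> free_eq v u
| fe_trans : forall u v w, free_eq u v -> free_eq v w -> free_eq u w
| fe_cancel : forall u v a, free_eq (u ++ a :: linv a :: v) (u ++ v).

Definition wcomm (u v : word) : word := winv u ++ winv v ++ u ++ v.

Definition in_commutator_subgroup (m : nat) (w : word) : Prop :=
  exists ps : list (word * word),
    Forall (fun p => word_in m (fst p) /\ word_in m (snd p)) ps /\
    free_eq w (concat (map (fun p => wcomm (fst p) (snd p)) ps)).

(** Word map: evaluation of w at the tuple g (only g 0, ..., g (m-1) matter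
    for w in F_m). *)
Definition eval_letter (G : Group) (g : nat -> G) (l : letter) : G :=
  if snd l then g (fst l) else ginv G (g (fst l)).

Fixpoint eval_word (G : Group) (g : nat -> G) (w : word) : G :=
  match w with
  | [] => gone G
  | l :: w' => gmul G (eval_letter G g l) (eval_word G g w')
  end.

Definition word_map_surjective (G : Group) (m : nat) (w : word) : Prop :=
  forall y : G, exists g : nat -> G, eval_word G g w = y.

Fixpoint gpow_nat (G : Group) (x : G) (n : nat) : G :=
  match n with
  | O => gone G
  | S k => gmul G x (gpow_nat G x k)
  end.

Definition gpow (G : Group) (x : G) (n : Z) : G :=
  match n with
  | Z0 => gone G
  | Zpos p => gpow_nat G x (Pos.to_nat p)
  | Zneg p => ginv G (gpow_nat G x (Pos.to_nat p))
  end.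

Definition quasimorphism (G : Group) (phi : G -> R) : Prop :=
  exists D : R, forall g h : G,
    Rabs (phi g + phi h - phi (gmul G g h)) <= D.

Definition homogeneous (G : Group) (phi : G -> R) : Prop :=
  forall (g : G) (n : Z), phi (gpow G g n) = IZR n * phi g.

Definition homog_quasimorphism (G : Group) (phi : G -> R) : Prop :=
  quasimorphism G phi /\ homogeneous G phi.

Definition hom_to_R (G : Group) (phi : G -> R) : Prop :=
  forall g h : G, phi (gmul G g h) = phi g + phi h.

Fixpoint lin_comb (G : Group) (c : nat -> R) (phis : nat -> G -> R) (n : nat)
  (g : G) : R :=
  match n with
  | O => 0
  | S k => lin_comb G c phis k g + c k * phis k g
  end.

(** Q(G)/Hom(G) is infinite-dimensional: for every n there are n elements of
    Q(G) whose classes modulo Hom(G) are linearly independent. *)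
Definition Q_mod_Hom_infinite_dim (G : Group) : Prop :=
  forall n : nat, exists phis : nat -> G -> R,
    (forall i, (i < n)%nat -> homog_quasimorphism G (phis i)) /\
    (forall c : nat -> R, hom_to_R G (lin_comb G c phis n) ->
       forall i, (i < n)%nat -> c i = 0).

From Stdlib Require Import Reals List Arith ZArith Lia Lra Classical Cantor
  FunctionalExtensionality ProofIrrelevance ClassicalEpsilon.
Import ListNotations.
Open Scope R_scope.

(* In a divisible group every word map whose word has a nonzero exponent sum in some
   variable x_i is surjective: put an n-th root of the target at x_i and 1 elsewhere.
   Words all of whose exponent sums vanish lie in [F_m, F_m].

   A divisible group E with a homogeneous quasimorphism that is not a homomorphism is
   the extension of PSU(1,1) = PSL(2,R) by R along the bounded cocycle omega (an angle
   in (-pi/2, pi/2)): the R-coordinate is a quasimorphism of defect pi/2, and roots exist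
   because each element h lies in the commutative plane R + R h, an algebra
   R[X]/(X^2 - 2 tau X + 1) whose norm-one elements form a circle, a line or a hyperbola.
   Its homogenization vanishes on three explicit elements but not on their product.
   Countably many independent copies of it live on the subgroup of E^N generated by
   these triples in each coordinate and closed under taking roots, which is countable
   and divisible. *)

Section GroupFacts.
Variable G : Group.
Local Notation "x * y" := (gmul G x y).
Local Notation "1" := (gone G).

Lemma mul_cancel_l (a x y : G) : a * x = a * y -> x = y.
Proof.
  intro H. rewrite <- (gmul_1l G x), <- (gmul_1l G y), <- (gmul_Vl G a).
  now rewrite <- !gmul_assoc, H.
Qed.

Lemma inv_unique (x y : G) : x * y = 1 -> y = ginv G x.
Proof. intro H. apply (mul_cancel_l x). now rewrite H, gmul_Vr. Qed.

Lemma inv_inv (x : G) : ginv G (ginv G x) = x.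
Proof. symmetry. apply inv_unique, gmul_Vl. Qed.

Lemma inv_one : ginv G 1 = 1.
Proof. symmetry. apply inv_unique, gmul_1l. Qed.

Lemma inv_mul (x y : G) : ginv G (x * y) = ginv G y * ginv G x.
Proof.
  symmetry. apply inv_unique.
  now rewrite gmul_assoc, <- (gmul_assoc G x y), gmul_Vr, gmul_1r, gmul_Vr.
Qed.

Lemma gpow_nat_add (x : G) a b :
  gpow_nat G x (a + b) = gpow_nat G x a * gpow_nat G x b.
Proof.
  induction a; simpl; [now rewrite gmul_1l | now rewrite IHa, gmul_assoc].
Qed.

Lemma gpow_nat_comm (x : G) n : x * gpow_nat G x n = gpow_nat G x n * x.
Proof.
  change (gpow_nat G x (S n) = gpow_nat G x n * x).
  rewrite <- Nat.add_1_r, gpow_nat_add. simpl. now rewrite gmul_1r.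
Qed.

Lemma gpow_nat_mul (x : G) a b : gpow_nat G x (a * b) = gpow_nat G (gpow_nat G x a) b.
Proof.
  induction b; simpl; [now rewrite Nat.mul_0_r|].
  now rewrite Nat.mul_succ_r, gpow_nat_add, IHb, gpow_nat_comm.
Qed.

Lemma gpow_nat_inv (x : G) n : gpow_nat G (ginv G x) n = ginv G (gpow_nat G x n).
Proof.
  induction n; simpl; [now rewrite inv_one|].
  now rewrite IHn, <- inv_mul, gpow_nat_comm.
Qed.

Lemma gpow_succ (x : G) z : gpow G x (z + 1) = x * gpow G x z.
Proof.
  destruct z as [|p|p]; simpl.
  - now rewrite gmul_1r.
  - now rewrite Pos2Nat.inj_add, Nat.add_1_r.
  - destruct (Pos.eq_dec p 1) as [->|Hp].
    + simpl. now rewrite gmul_1r, gmul_Vr.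
    + rewrite Z.pos_sub_lt by lia. simpl.
      replace (Pos.to_nat p) with (S (Pos.to_nat (p - 1))) by lia. simpl.
      now rewrite gpow_nat_comm, inv_mul, gmul_assoc, gmul_Vr, gmul_1l.
Qed.

Lemma gpow_pred (x : G) z : gpow G x (z - 1) = ginv G x * gpow G x z.
Proof.
  rewrite <- (Z.sub_add 1 z) at 2.
  now rewrite gpow_succ, gmul_assoc, gmul_Vl, gmul_1l.
Qed.

End GroupFacts.

(** * Word maps in divisible groups *)

Definition divisible (G : Group) : Prop :=
  forall (y : G) (n : nat), exists r : G, gpow_nat G r (S n) = y.

Definition letter_exp_sum (i : nat) (l : letter) : Z :=
  if Nat.eqb (fst l) i then (if snd l then 1 else -1)%Z else 0%Z.

Fixpoint exp_sum (i : nat) (w : word) : Z :=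
  match w with
  | [] => 0%Z
  | l :: w' => (letter_exp_sum i l + exp_sum i w')%Z
  end.

Lemma exp_sum_app i u v : exp_sum i (u ++ v) = (exp_sum i u + exp_sum i v)%Z.
Proof. induction u; simpl; lia. Qed.

Lemma letter_exp_sum_linv i l : (letter_exp_sum i l + letter_exp_sum i (linv l) = 0)%Z.
Proof. destruct l as [a []]; unfold letter_exp_sum, linv; simpl; destruct (Nat.eqb a i); lia. Qed.

Definition point_tuple (G : Group) (i : nat) (r : G) : nat -> G :=
  fun j => if Nat.eqb j i then r else gone G.

Lemma eval_point_tuple (G : Group) i r w :
  eval_word G (point_tuple G i r) w = gpow G r (exp_sum i w).
Proof.
  induction w as [|l w IH]; simpl; [reflexivity|].
  rewrite IH. unfold eval_letter, letter_exp_sum, point_tuple.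
  destruct (Nat.eqb (fst l) i), (snd l).
  - now rewrite Z.add_comm, gpow_succ.
  - now replace (-1 + exp_sum i w)%Z with (exp_sum i w - 1)%Z by lia; rewrite gpow_pred.
  - now rewrite gmul_1l.
  - now rewrite inv_one, gmul_1l.
Qed.

Lemma free_eq_app p x y s : free_eq x y -> free_eq (p ++ x ++ s) (p ++ y ++ s).
Proof.
  induction 1 as [| | |u v a].
  - apply fe_refl.
  - now apply fe_sym.
  - eapply fe_trans; eauto.
  - replace (p ++ (u ++ a :: linv a :: v) ++ s) with ((p ++ u) ++ a :: linv a :: (v ++ s))
      by now rewrite <- !app_assoc.
    replace (p ++ (u ++ v) ++ s) with ((p ++ u) ++ (v ++ s)) by now rewrite <- !app_assoc.
    apply fe_cancel.
Qed.

Lemma linv_linv l : linv (linv l) = l.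
Proof. destruct l as [a b]; unfold linv; simpl; now rewrite Bool.negb_involutive. Qed.

Lemma winv_winv u : winv (winv u) = u.
Proof.
  unfold winv. rewrite map_rev, rev_involutive, map_map.
  erewrite map_ext; [apply map_id | apply linv_linv].
Qed.

Lemma free_eq_winv_l u : free_eq (winv u ++ u) [].
Proof.
  induction u as [|a u IH]; simpl; [apply fe_refl|].
  change (winv (a :: u)) with (winv u ++ [linv a]). rewrite <- app_assoc. simpl.
  eapply fe_trans; [|exact IH].
  pattern a at 2; rewrite <- (linv_linv a). apply fe_cancel.
Qed.

Lemma word_in_winv m u : word_in m u -> word_in m (winv u).
Proof.
  intro H. apply Forall_rev, Forall_map.
  eapply Forall_impl; [|exact H]. now intros [a b].
Qed.

Lemma exp_sum_cons_nonzero l w :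
  ~ In (linv l) w -> exp_sum (fst l) (l :: w) <> 0%Z.
Proof.
  enough (H : ~ In (linv l) w ->
     if snd l then (exp_sum (fst l) w >= 0)%Z else (exp_sum (fst l) w <= 0)%Z).
  { intro Hn. specialize (H Hn). simpl. unfold letter_exp_sum. rewrite Nat.eqb_refl.
    destruct (snd l); lia. }
  induction w as [|k w IH]; simpl; intro Hn; [now destruct (snd l)|].
  specialize (IH (fun H => Hn (or_intror H))).
  destruct l as [a b], k as [c d]; unfold letter_exp_sum, linv in *; cbn [fst snd] in *.
  destruct (Nat.eqb_spec c a) as [->|]; [|destruct b; lia].
  destruct b, d; cbn [negb] in *; try lia.
  all: exfalso; apply Hn; left; reflexivity.
Qed.

Lemma free_eq_extract_commutator l u v :
  free_eq (l :: u ++ linv l :: v) (wcomm [linv l] (winv u) ++ u ++ v).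
Proof.
  assert (HC : wcomm [linv l] (winv u) = (l :: u ++ [linv l]) ++ winv u).
  { unfold wcomm. rewrite winv_winv. unfold winv at 1. simpl.
    now rewrite linv_linv, <- app_assoc. }
  rewrite HC.
  replace (((l :: u ++ [linv l]) ++ winv u) ++ u ++ v)
    with ((l :: u ++ [linv l]) ++ (winv u ++ u) ++ v) by now rewrite !app_assoc.
  replace (l :: u ++ linv l :: v) with ((l :: u ++ [linv l]) ++ [] ++ v)
    by (simpl; now rewrite <- app_assoc).
  apply fe_sym, free_eq_app, free_eq_winv_l.
Qed.

Lemma in_commutator_subgroup_of_exp_sum_0 m w : word_in m w ->
  (forall i, exp_sum i w = 0%Z) -> in_commutator_subgroup m w.
Proof.
  remember (length w) as n eqn:Hn. revert w Hn.
  induction n as [n IHn] using lt_wf_ind; intros w Hn Hw Hes.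
  destruct w as [|l w'].
  { exists []. split; [constructor | apply fe_refl]. }
  assert (Hin : In (linv l) w').
  { apply NNPP. intro Hnot. now apply (exp_sum_cons_nonzero l w' Hnot). }
  apply in_split in Hin as (u & v & ->).
  inversion Hw as [|? ? Hl Hw']; subst.
  apply Forall_app in Hw' as [Hu Hv]. inversion Hv; subst.
  destruct (IHn (length (u ++ v)) ltac:(simpl; rewrite !length_app; simpl; lia)
              (u ++ v) eq_refl) as [ps [Hps Hfe]].
  - apply Forall_app; auto.
  - intro i. specialize (Hes i). simpl in Hes. rewrite exp_sum_app in *. simpl in Hes.
    pose proof (letter_exp_sum_linv i l). lia.
  - exists (([linv l], winv u) :: ps). split.
    + constructor; auto. split; [now repeat constructor | now apply word_in_winv].
    + eapply fe_trans; [apply free_eq_extract_commutator|].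
      pose proof (free_eq_app (wcomm [linv l] (winv u)) _ _ [] Hfe) as H.
      rewrite !app_nil_r in H. exact H.
Qed.

Lemma word_map_surjective_of_divisible (G : Group) : divisible G ->
  forall (m : nat) (w : word), word_in m w ->
    ~ in_commutator_subgroup m w -> word_map_surjective G m w.
Proof.
  intros Hdiv m w Hw Hnc y.
  assert (exists i, exp_sum i w <> 0%Z) as [i Hi].
  { apply NNPP. intro H. apply Hnc, (in_commutator_subgroup_of_exp_sum_0 m w Hw).
    intro i. apply NNPP. eauto. }
  destruct (exp_sum i w) as [|p|p] eqn:E; [congruence| |].
  - destruct (Hdiv y (pred (Pos.to_nat p))) as [r Hr].
    exists (point_tuple G i r). rewrite eval_point_tuple, E. simpl.
    now replace (Pos.to_nat p) with (S (pred (Pos.to_nat p))) by lia.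
  - destruct (Hdiv (ginv G y) (pred (Pos.to_nat p))) as [r Hr].
    exists (point_tuple G i r). rewrite eval_point_tuple, E. simpl.
    replace (Pos.to_nat p) with (S (pred (Pos.to_nat p))) by lia.
    now rewrite Hr, inv_inv.
Qed.

(** * Homogenization of quasimorphisms *)

Lemma Rabs_le_inv x a : Rabs x <= a -> - a <= x <= a.
Proof. unfold Rabs. destruct Rcase_abs; lra. Qed.

Lemma Un_cv_const c : Un_cv (fun _ => c) c.
Proof. intros e He. exists O. intros. unfold Rdist. rewrite Rminus_diag, Rabs_R0. lra. Qed.

Lemma Un_cv_scal_of_close (a b : nat -> R) L c C :
  Un_cv b L -> (forall k, Rabs (a k - c * b k) <= C / 2 ^ k) -> Un_cv a (c * L).
Proof.
  intros Hb Hab.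
  assert (Hd : Un_cv (fun k => a k - c * b k) 0).
  { intros e He. destruct (cv_pow_half C e He) as [N HN]. exists N. intros n Hn.
    specialize (HN n Hn). specialize (Hab n). unfold Rdist in *. rewrite Rminus_0_r in *.
    pose proof (Rle_abs (C / 2 ^ n)). lra. }
  pose proof (CV_plus _ _ _ _ Hd (CV_mult _ _ _ _ (Un_cv_const c) Hb)) as H.
  rewrite Rplus_0_l in H. intros e He. destruct (H e He) as [N HN]. exists N.
  intros n Hn. specialize (HN n Hn). now replace (a n - c * b n + c * b n) with (a n) in HN by ring.
Qed.

Lemma Un_cv_limit_close (a : nat -> R) l c D : Un_cv a l ->
  (forall k, Rabs (a k - c) <= D) -> Rabs (l - c) <= D.
Proof.
  intros Ha H. apply Rabs_le. split.
  - cut (c - D <= l); [lra|].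
    apply (Rle_cv_lim (Un := fun _ => c - D) (Vn := a)); auto using Un_cv_const.
    intro n. specialize (H n). apply Rabs_le_inv in H. lra.
  - cut (l <= c + D); [lra|].
    apply (Rle_cv_lim (Un := a) (Vn := fun _ => c + D)); auto using Un_cv_const.
    intro n. specialize (H n). apply Rabs_le_inv in H. lra.
Qed.

Lemma pow2_pos k : 0 < 2 ^ k.
Proof. apply pow_lt; lra. Qed.

Lemma Rabs_div_pow2 x k : Rabs (x / 2 ^ k) = Rabs x / 2 ^ k.
Proof.
  unfold Rdiv. rewrite Rabs_mult, Rabs_inv, (Rabs_pos_eq (2 ^ k)); auto using Rlt_le, pow2_pos.
Qed.

Section Homogenization.
Variable E : Group.
Variable phi : E -> R.
Variable D : R.
Hypothesis defect_phi : forall g h : E, Rabs (phi g + phi h - phi (gmul E g h)) <= D.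

Lemma phi_one_bound : Rabs (phi (gone E)) <= D.
Proof.
  pose proof (defect_phi (gone E) (gone E)) as H. rewrite gmul_1l in H.
  now replace (phi (gone E) + phi (gone E) - phi (gone E)) with (phi (gone E)) in H by ring.
Qed.

Lemma defect_nonneg : 0 <= D.
Proof. eapply Rle_trans; [apply Rabs_pos | apply phi_one_bound]. Qed.

Definition dyadic_average (g : E) (k : nat) : R := phi (gpow_nat E g (2 ^ k)) / 2 ^ k.

Lemma dyadic_average_step g k :
  Rabs (dyadic_average g (S k) - dyadic_average g k) <= D / 2 ^ S k.
Proof.
  unfold dyadic_average. replace (2 ^ S k)%nat with (2 ^ k + 2 ^ k)%nat by (simpl; lia).
  rewrite gpow_nat_add.
  set (y := gpow_nat E g (2 ^ k)). pose proof (pow2_pos k).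
  replace (phi (gmul E y y) / 2 ^ S k - phi y / 2 ^ k)
    with (- (phi y + phi y - phi (gmul E y y)) / 2 ^ S k) by (simpl; field; lra).
  rewrite Rabs_div_pow2, Rabs_Ropp.
  apply Rmult_le_compat_r; auto. apply Rlt_le, Rinv_0_lt_compat, pow2_pos.
Qed.

Lemma dyadic_average_shift g N n :
  Rabs (dyadic_average g (N + n) - dyadic_average g N) <= D / 2 ^ N - D / 2 ^ (N + n).
Proof.
  induction n.
  - rewrite Nat.add_0_r, Rminus_diag, Rabs_R0. lra.
  - rewrite Nat.add_succ_r.
    pose proof (dyadic_average_step g (N + n)).
    pose proof (Rabs_triang (dyadic_average g (S (N + n)) - dyadic_average g (N + n))
                            (dyadic_average g (N + n) - dyadic_average g N)).
    assert (D / 2 ^ S (N + n) = D / 2 ^ (N + n) - D / 2 ^ S (N + n)).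
    { simpl. pose proof (pow2_pos (N + n)). field. lra. }
    replace (dyadic_average g (S (N + n)) - dyadic_average g N) with
      ((dyadic_average g (S (N + n)) - dyadic_average g (N + n))
       + (dyadic_average g (N + n) - dyadic_average g N)) by ring.
    lra.
Qed.

Lemma dyadic_average_near g N p : (N <= p)%nat ->
  Rabs (dyadic_average g p - dyadic_average g N) <= D / 2 ^ N.
Proof.
  intro Hp. replace p with (N + (p - N))%nat by lia.
  pose proof (dyadic_average_shift g N (p - N)).
  pose proof (pow2_pos (N + (p - N))). pose proof defect_nonneg.
  assert (0 <= D / 2 ^ (N + (p - N))) by (apply Rle_mult_inv_pos; lra). lra.
Qed.

Lemma dyadic_average_cauchy g : Cauchy_crit (dyadic_average g).
Proof.
  intros e He. destruct (cv_pow_half D (e / 2) ltac:(lra)) as [N HN]. exists N.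
  intros n m Hn Hm. unfold Rdist in *.
  specialize (HN N (le_n N)). rewrite Rminus_0_r in HN.
  pose proof (Rle_abs (D / 2 ^ N)).
  pose proof (dyadic_average_near g N n Hn). pose proof (dyadic_average_near g N m Hm).
  pose proof (Rabs_triang (dyadic_average g n - dyadic_average g N)
                          (- (dyadic_average g m - dyadic_average g N))).
  rewrite Rabs_Ropp in H2.
  replace (dyadic_average g n - dyadic_average g N + - (dyadic_average g m - dyadic_average g N))
    with (dyadic_average g n - dyadic_average g m) in H2 by ring.
  lra.
Qed.

Definition homogenization (g : E) : R :=
  proj1_sig (R_complete (dyadic_average g) (dyadic_average_cauchy g)).

Lemma homogenization_limit g : Un_cv (dyadic_average g) (homogenization g).
Proof. unfold homogenization. now destruct R_complete. Qed.

Lemma homogenization_close g : Rabs (homogenization g - phi g) <= D.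
Proof.
  apply (Un_cv_limit_close (dyadic_average g)); [apply homogenization_limit|]. intro k.
  pose proof (dyadic_average_shift g 0 k) as H. simpl in H.
  unfold dyadic_average at 2 in H. simpl in H. rewrite gmul_1r, Rdiv_1_r in H.
  pose proof (pow2_pos k). pose proof defect_nonneg.
  assert (0 <= D / 2 ^ k) by (apply Rle_mult_inv_pos; lra). lra.
Qed.

Lemma homogenization_defect g h :
  Rabs (homogenization g + homogenization h - homogenization (gmul E g h)) <= 4 * D.
Proof.
  pose proof (homogenization_close g) as Hg. pose proof (homogenization_close h) as Hh.
  pose proof (homogenization_close (gmul E g h)) as Hgh. pose proof (defect_phi g h) as Hd.
  apply Rabs_le_inv in Hg, Hh, Hgh, Hd. apply Rabs_le. lra.
Qed.

Lemma phi_pow_mul_close g p m :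
  Rabs (phi (gpow_nat E g (p * m)) - INR p * phi (gpow_nat E g m)) <= (INR p + 1) * D.
Proof.
  induction p.
  - simpl. rewrite Rmult_0_l, Rminus_0_r, Rplus_0_l, Rmult_1_l. apply phi_one_bound.
  - rewrite S_INR. simpl (S p * m)%nat. rewrite gpow_nat_add.
    pose proof (defect_phi (gpow_nat E g m) (gpow_nat E g (p * m))) as H.
    apply Rabs_le_inv in H, IHp. apply Rabs_le. lra.
Qed.

Lemma homogenization_pow_nat g p : homogenization (gpow_nat E g p) = INR p * homogenization g.
Proof.
  apply (UL_sequence (dyadic_average (gpow_nat E g p))); [apply homogenization_limit|].
  apply (Un_cv_scal_of_close _ (dyadic_average g) _ _ ((INR p + 1) * D));
    [apply homogenization_limit|].
  intro k. unfold dyadic_average. rewrite <- gpow_nat_mul. pose proof (pow2_pos k).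
  replace (phi (gpow_nat E g (p * 2 ^ k)) / 2 ^ k - INR p * (phi (gpow_nat E g (2 ^ k)) / 2 ^ k))
    with ((phi (gpow_nat E g (p * 2 ^ k)) - INR p * phi (gpow_nat E g (2 ^ k))) / 2 ^ k)
    by (field; lra).
  rewrite Rabs_div_pow2. apply Rmult_le_compat_r; [apply Rlt_le, Rinv_0_lt_compat; lra|].
  apply phi_pow_mul_close.
Qed.

Lemma homogenization_inv g : homogenization (ginv E g) = -1 * homogenization g.
Proof.
  apply (UL_sequence (dyadic_average (ginv E g))); [apply homogenization_limit|].
  apply (Un_cv_scal_of_close _ (dyadic_average g) _ _ (2 * D)); [apply homogenization_limit|].
  intro k. unfold dyadic_average. rewrite gpow_nat_inv.
  set (y := gpow_nat E g (2 ^ k)).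
  assert (Rabs (phi (ginv E y) + phi y) <= 2 * D).
  { pose proof (defect_phi (ginv E y) y) as H. rewrite gmul_Vl in H.
    pose proof phi_one_bound as H0. apply Rabs_le_inv in H, H0. apply Rabs_le. lra. }
  pose proof (pow2_pos k).
  replace (phi (ginv E y) / 2 ^ k - -1 * (phi y / 2 ^ k))
    with ((phi (ginv E y) + phi y) / 2 ^ k) by (field; lra).
  rewrite Rabs_div_pow2. apply Rmult_le_compat_r; auto.
  apply Rlt_le, Rinv_0_lt_compat; lra.
Qed.

Lemma homogenization_homogeneous : homogeneous E homogenization.
Proof.
  intros g [|p|p]; simpl.
  - pose proof (homogenization_pow_nat g 0) as H. simpl in H. now rewrite H, !Rmult_0_l.
  - now rewrite homogenization_pow_nat, INR_IPR.
  - rewrite homogenization_inv, homogenization_pow_nat, INR_IPR.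
    change (IZR (Z.neg p)) with (- IPR p). ring.
Qed.

Lemma homogenization_one : homogenization (gone E) = 0.
Proof. pose proof (homogenization_homogeneous (gone E) 0%Z) as H. simpl in H. lra. Qed.

Lemma homogenization_of_linear_powers g c :
  (forall n, phi (gpow_nat E g n) = INR n * c) -> homogenization g = c.
Proof.
  intro H. apply (UL_sequence (dyadic_average g)); [apply homogenization_limit|].
  intros e He. exists O. intros n _. unfold dyadic_average, Rdist.
  rewrite H, pow_INR. simpl INR. pose proof (pow2_pos n).
  replace ((1 + 1) ^ n * c / 2 ^ n - c) with 0 by (replace (1 + 1) with 2 by ring; field; lra).
  rewrite Rabs_R0. lra.
Qed.

End Homogenization.

(** * Countable divisible groups with many quasimorphisms *)

Section PowerGroup.
Variable E : Group.

Definition power_group : Group.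
Proof.
  refine (Build_Group (nat -> E) (fun f g i => gmul E (f i) (g i))
            (fun f i => ginv E (f i)) (fun _ => gone E) _ _ _ _ _);
  intros; apply functional_extensionality; intro i.
  - apply gmul_assoc.
  - apply gmul_1l.
  - apply gmul_1r.
  - apply gmul_Vl.
  - apply gmul_Vr.
Defined.

Lemma power_group_pow_nat (f : power_group) n i : gpow_nat power_group f n i = gpow_nat E (f i) n.
Proof. induction n; simpl; congruence. Qed.

Lemma power_group_pow (f : power_group) z i : gpow power_group f z i = gpow E (f i) z.
Proof. destruct z; simpl; rewrite ?power_group_pow_nat; reflexivity. Qed.

Lemma power_group_divisible : divisible E -> divisible power_group.
Proof.
  intros Hdiv y n.
  destruct (choice (fun i r => gpow_nat E r (S n) = y i) (fun i => Hdiv (y i) n)) as [f Hf].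
  exists f. apply functional_extensionality. intro i. now rewrite power_group_pow_nat.
Qed.

End PowerGroup.

(* Elements are values of syntax trees, which makes the group countable. *)
Section RootClosure.
Variable K : Group.
Variable root : K -> nat -> K.
Hypothesis root_spec : forall y n, gpow_nat K (root y n) (S n) = y.
Variable gen : nat -> K.

Inductive root_term :=
| rt_gen (k : nat)
| rt_one
| rt_mul (a b : root_term)
| rt_inv (a : root_term)
| rt_root (a : root_term) (n : nat).

Fixpoint rt_eval (t : root_term) : K :=
  match t with
  | rt_gen k => gen k
  | rt_one => gone K
  | rt_mul a b => gmul K (rt_eval a) (rt_eval b)
  | rt_inv a => ginv K (rt_eval a)
  | rt_root a n => root (rt_eval a) n
  end.

Definition root_closed_elt := {x : K | exists t, rt_eval t = x}.

Lemma root_closed_elt_eq (x y : root_closed_elt) : proj1_sig x = proj1_sig y -> x = y.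
Proof. destruct x, y; simpl; intro; subst; f_equal; apply proof_irrelevance. Qed.

Definition rc_mul (x y : root_closed_elt) : root_closed_elt.
Proof.
  exists (gmul K (proj1_sig x) (proj1_sig y)).
  destruct x as [x [a <-]], y as [y [b <-]]. now exists (rt_mul a b).
Defined.

Definition rc_inv (x : root_closed_elt) : root_closed_elt.
Proof.
  exists (ginv K (proj1_sig x)). destruct x as [x [a <-]]. now exists (rt_inv a).
Defined.

Definition rc_one : root_closed_elt := exist _ (gone K) (ex_intro _ rt_one eq_refl).

Definition root_closure : Group.
Proof.
  refine (Build_Group root_closed_elt rc_mul rc_inv rc_one _ _ _ _ _);
  intros; apply root_closed_elt_eq; simpl.
  - apply gmul_assoc.
  - apply gmul_1l.
  - apply gmul_1r.
  - apply gmul_Vl.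
  - apply gmul_Vr.
Defined.

Lemma root_closure_pow_nat (x : root_closure) n :
  proj1_sig (gpow_nat root_closure x n) = gpow_nat K (proj1_sig x) n.
Proof. induction n; simpl; congruence. Qed.

Lemma root_closure_pow (x : root_closure) z :
  proj1_sig (gpow root_closure x z) = gpow K (proj1_sig x) z.
Proof. destruct z; simpl; rewrite ?root_closure_pow_nat; reflexivity. Qed.

Lemma root_closure_divisible : divisible root_closure.
Proof.
  intros [y [a Ha]] n.
  exists (exist _ (root y n) (ex_intro _ (rt_root a n) (f_equal (fun z => root z n) Ha))).
  apply root_closed_elt_eq. rewrite root_closure_pow_nat. apply root_spec.
Qed.

Fixpoint rt_code (t : root_term) : nat :=
  match t with
  | rt_gen k => Cantor.to_nat (0, k)
  | rt_one => Cantor.to_nat (1, 0)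
  | rt_mul a b => Cantor.to_nat (2, Cantor.to_nat (rt_code a, rt_code b))
  | rt_inv a => Cantor.to_nat (3, rt_code a)
  | rt_root a n => Cantor.to_nat (4, Cantor.to_nat (rt_code a, n))
  end%nat.

Lemma rt_code_inj s t : rt_code s = rt_code t -> s = t.
Proof.
  revert t. induction s; destruct t; cbn [rt_code]; intro H;
    apply Cantor.to_nat_inj, pair_equal_spec in H as [H0 H]; try discriminate.
  all: try apply Cantor.to_nat_inj, pair_equal_spec in H as [H H'].
  all: f_equal; auto.
Qed.

Lemma root_closure_countable : countable_group root_closure.
Proof.
  exists (fun x : root_closure =>
            rt_code (proj1_sig (constructive_indefinite_description _ (proj2_sig x)))).
  intros x y H. apply rt_code_inj in H. apply root_closed_elt_eq.
  destruct (constructive_indefinite_description _ (proj2_sig x)) as [a Ha].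
  destruct (constructive_indefinite_description _ (proj2_sig y)) as [b Hb].
  simpl in H. congruence.
Qed.

End RootClosure.

Definition some_root {K : Group} (Hdiv : divisible K) (y : K) (n : nat) : K :=
  proj1_sig (constructive_indefinite_description _ (Hdiv y n)).

Lemma some_root_spec {K : Group} (Hdiv : divisible K) y n :
  gpow_nat K (some_root Hdiv y n) (S n) = y.
Proof. unfold some_root. now destruct constructive_indefinite_description. Qed.

Section IndependentCopies.
Variable E : Group.
Variable phi : E -> R.
Variable D : R.
Hypothesis defect_phi : forall g h : E, Rabs (phi g + phi h - phi (gmul E g h)) <= D.
Hypothesis E_divisible : divisible E.
Variables p1 p2 p3 : E.
Local Notation hphi := (homogenization E phi D defect_phi).
Hypothesis hphi_p1 : hphi p1 = 0.
Hypothesis hphi_p2 : hphi p2 = 0.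
Hypothesis hphi_p3 : hphi p3 = 0.
Hypothesis hphi_p123 : hphi (gmul E p1 (gmul E p2 p3)) <> 0.

Local Notation K := (power_group E).

Definition coord_vector (j : nat) (x : E) : K :=
  fun i => if Nat.eqb i j then x else gone E.

Definition triple (r : nat) : E := match r with O => p1 | 1%nat => p2 | _ => p3 end.

Definition copy_generator (k : nat) : K :=
  let (j, r) := Cantor.of_nat k in coord_vector j (triple r).

Definition copies_group : Group :=
  root_closure K (some_root (power_group_divisible E E_divisible)) copy_generator.

Definition coord_quasimorphism (i : nat) (x : copies_group) : R := hphi (proj1_sig x i).

Lemma coord_quasimorphism_homog i : homog_quasimorphism copies_group (coord_quasimorphism i).
Proof.
  split.
  - exists (4 * D). intros g h. apply homogenization_defect.
  - intros g n. unfold coord_quasimorphism.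
    rewrite root_closure_pow, power_group_pow. apply homogenization_homogeneous.
Qed.

Definition supported_at (j : nat) (g : copies_group) : Prop :=
  forall i, i <> j -> proj1_sig g i = gone E.

Lemma supported_at_mul j g h :
  supported_at j g -> supported_at j h -> supported_at j (gmul copies_group g h).
Proof. intros Hg Hh i Hi. simpl. rewrite Hg, Hh by assumption. apply gmul_1l. Qed.

Definition triple_copy (j r : nat) : copies_group.
Proof.
  exists (coord_vector j (triple r)). exists (rt_gen (Cantor.to_nat (j, r))).
  cbn [rt_eval]. unfold copy_generator. now rewrite Cantor.cancel_of_to.
Defined.

Lemma triple_copy_supported j r : supported_at j (triple_copy j r).
Proof. intros i Hi. simpl. unfold coord_vector. now rewrite (proj2 (Nat.eqb_neq i j) Hi). Qed.

Lemma lin_comb_supported_below c n j (g : copies_group) : supported_at j g -> (n <= j)%nat ->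
  lin_comb copies_group c coord_quasimorphism n g = 0.
Proof.
  intro Hg. induction n; simpl; intro Hn; [reflexivity|].
  unfold coord_quasimorphism at 2. rewrite Hg, homogenization_one, IHn by lia. ring.
Qed.

Lemma lin_comb_supported c n j (g : copies_group) : supported_at j g -> (j < n)%nat ->
  lin_comb copies_group c coord_quasimorphism n g = c j * hphi (proj1_sig g j).
Proof.
  intro Hg. induction n; simpl; intro Hj; [lia|]. unfold coord_quasimorphism at 2.
  destruct (Nat.eq_dec n j) as [->|Hne].
  - rewrite (lin_comb_supported_below c j j) by auto. now rewrite Rplus_0_l.
  - rewrite Hg, homogenization_one, IHn by lia. now rewrite Rmult_0_r, Rplus_0_r.
Qed.

Lemma copies_group_Q_mod_Hom_infinite_dim : Q_mod_Hom_infinite_dim copies_group.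
Proof.
  intro n. exists coord_quasimorphism. split; [intros; apply coord_quasimorphism_homog|].
  intros c Hhom j Hj.
  set (a := triple_copy j 0). set (b := triple_copy j 1). set (d := triple_copy j 2).
  assert (Sa : supported_at j a) by apply triple_copy_supported.
  assert (Sb : supported_at j b) by apply triple_copy_supported.
  assert (Sd : supported_at j d) by apply triple_copy_supported.
  pose proof (supported_at_mul j b d Sb Sd) as Sbd.
  pose proof (supported_at_mul j a _ Sa Sbd) as Sabd.
  pose proof (Hhom a (gmul copies_group b d)) as E1. pose proof (Hhom b d) as E2.
  rewrite !(lin_comb_supported c n j) in E1, E2 by assumption.
  simpl in E1, E2. unfold coord_vector in E1, E2. rewrite Nat.eqb_refl in E1, E2.
  simpl in E1, E2. rewrite hphi_p1 in E1. rewrite hphi_p2, hphi_p3 in E2.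
  apply NNPP. intro Hc. apply hphi_p123, (Rmult_eq_reg_l (c j)); [lra | exact Hc].
Qed.

End IndependentCopies.

(** * A central extension of PSU(1,1) by R *)

Definition cmul (z w : R * R) : R * R :=
  (fst z * fst w - snd z * snd w, fst z * snd w + snd z * fst w).
Definition cadd (z w : R * R) : R * R := (fst z + fst w, snd z + snd w).
Definition cconj (z : R * R) : R * R := (fst z, - snd z).
Definition copp (z : R * R) : R * R := (- fst z, - snd z).
Definition cscale (c : R) (z : R * R) : R * R := (c * fst z, c * snd z).
Definition cnorm2 (z : R * R) : R := fst z * fst z + snd z * snd z.

Lemma cnorm2_nonneg z : 0 <= cnorm2 z.
Proof. unfold cnorm2. nra. Qed.

(* [SU a b] stands for the complex matrix ((a, b), (conj b, conj a)); those with
   determinant [|a|^2 - |b|^2 = 1] form SU(1,1), isomorphic to SL(2,R). *)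
Record su_pair := SU { alpha : R * R; beta : R * R }.

Definition su_mul (v w : su_pair) : su_pair :=
  SU (cadd (cmul (alpha v) (alpha w)) (cmul (beta v) (cconj (beta w))))
     (cadd (cmul (alpha v) (beta w)) (cmul (beta v) (cconj (alpha w)))).
Definition su_neg (v : su_pair) : su_pair := SU (copp (alpha v)) (copp (beta v)).
Definition su_inv (v : su_pair) : su_pair := SU (cconj (alpha v)) (copp (beta v)).
Definition su_one : su_pair := SU (1, 0) (0, 0).
Definition su_det (v : su_pair) : R := cnorm2 (alpha v) - cnorm2 (beta v).

Ltac su_ring :=
  repeat match goal with
  | v : su_pair |- _ => let a := fresh "a" in let b := fresh "b" in destruct v as [[a ?] [b ?]]
  end;
  unfold su_mul, su_neg, su_inv, su_one, su_det, cmul, cadd, cconj, copp, cnorm2; simpl;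
  first [ ring
        | apply (f_equal2 SU); apply injective_projections; simpl; ring
        | apply injective_projections; simpl; ring ].

Lemma su_mul_assoc x y z : su_mul x (su_mul y z) = su_mul (su_mul x y) z.
Proof. su_ring. Qed.
Lemma su_mul_neg_l x y : su_mul (su_neg x) y = su_neg (su_mul x y).
Proof. su_ring. Qed.
Lemma su_mul_neg_r x y : su_mul x (su_neg y) = su_neg (su_mul x y).
Proof. su_ring. Qed.
Lemma su_neg_neg x : su_neg (su_neg x) = x.
Proof. su_ring. Qed.
Lemma su_mul_1l x : su_mul su_one x = x.
Proof. su_ring. Qed.
Lemma su_mul_1r x : su_mul x su_one = x.
Proof. su_ring. Qed.
Lemma su_det_mul x y : su_det (su_mul x y) = su_det x * su_det y.
Proof. su_ring. Qed.
Lemma su_det_neg x : su_det (su_neg x) = su_det x.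
Proof. su_ring. Qed.
Lemma su_det_inv x : su_det (su_inv x) = su_det x.
Proof. su_ring. Qed.
Lemma su_det_one : su_det su_one = 1.
Proof. su_ring. Qed.

Lemma su_mul_inv_r x : su_det x = 1 -> su_mul x (su_inv x) = su_one.
Proof.
  destruct x as [[a1 a2] [b1 b2]]. unfold su_det, cnorm2. simpl. intro H.
  unfold su_mul, su_inv, su_one, cmul, cadd, cconj, copp; simpl.
  apply (f_equal2 SU); apply injective_projections; simpl; nra.
Qed.

Lemma su_mul_inv_l x : su_det x = 1 -> su_mul (su_inv x) x = su_one.
Proof.
  destruct x as [[a1 a2] [b1 b2]]. unfold su_det, cnorm2. simpl. intro H.
  unfold su_mul, su_inv, su_one, cmul, cadd, cconj, copp; simpl.
  apply (f_equal2 SU); apply injective_projections; simpl; nra.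
Qed.

Lemma su_det_mul1 v w : su_det v = 1 -> su_det w = 1 -> su_det (su_mul v w) = 1.
Proof. intros Hv Hw. rewrite su_det_mul, Hv, Hw. ring. Qed.

Lemma su_det_inv1 v : su_det v = 1 -> su_det (su_inv v) = 1.
Proof. now rewrite su_det_inv. Qed.

Lemma su_det1_alpha v : su_det v = 1 -> 1 <= cnorm2 (alpha v).
Proof. unfold su_det. pose proof (cnorm2_nonneg (beta v)). lra. Qed.

(* [normalized v] picks one of [v], [-v]: the normalized elements of SU(1,1) model PSU(1,1). *)
Definition normalized (v : su_pair) : Prop :=
  0 < fst (alpha v) \/ (fst (alpha v) = 0 /\ 0 < snd (alpha v)).

Definition normalize (v : su_pair) : su_pair :=
  if Rlt_dec 0 (fst (alpha v)) then v else
  if Rlt_dec (fst (alpha v)) 0 then su_neg v else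
  if Rlt_dec 0 (snd (alpha v)) then v else su_neg v.

Lemma alpha_nonzero v : su_det v = 1 -> ~ (fst (alpha v) = 0 /\ snd (alpha v) = 0).
Proof.
  intros H [H1 H2]. apply su_det1_alpha in H. unfold cnorm2 in H. rewrite H1, H2 in H. lra.
Qed.

Lemma normalize_spec v : su_det v = 1 ->
  normalized (normalize v) /\ (normalize v = v \/ normalize v = su_neg v).
Proof.
  intro H. apply alpha_nonzero in H. unfold normalize, normalized.
  repeat destruct Rlt_dec; simpl; split; auto; lra.
Qed.

Lemma normalize_id v : normalized v -> normalize v = v.
Proof. unfold normalized, normalize. intros [H|[H1 H2]]; repeat destruct Rlt_dec; auto; lra. Qed.

Lemma normalize_neg v : su_det v = 1 -> normalize (su_neg v) = normalize v.
Proof.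
  intro H. apply alpha_nonzero in H. unfold normalize. simpl.
  repeat destruct Rlt_dec; rewrite ?su_neg_neg; try reflexivity; lra.
Qed.

Lemma normalize_sign v w : su_det v = 1 -> (w = v \/ w = su_neg v) -> normalize w = normalize v.
Proof. intros H [-> | ->]; auto using normalize_neg. Qed.

Lemma normalize_det1 v : su_det v = 1 -> su_det (normalize v) = 1.
Proof.
  intro H. destruct (normalize_spec v H) as [_ [-> | ->]]; now rewrite ?su_det_neg.
Qed.

Lemma normalize_mul_r v w : su_det v = 1 -> su_det w = 1 ->
  normalize (su_mul v (normalize w)) = normalize (su_mul v w).
Proof.
  intros Hv Hw. apply normalize_sign; [now apply su_det_mul1|].
  destruct (normalize_spec w Hw) as [_ [-> | ->]]; rewrite ?su_mul_neg_r; auto.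
Qed.

Lemma normalize_mul_l v w : su_det v = 1 -> su_det w = 1 ->
  normalize (su_mul (normalize v) w) = normalize (su_mul v w).
Proof.
  intros Hv Hw. apply normalize_sign; [now apply su_det_mul1|].
  destruct (normalize_spec v Hv) as [_ [-> | ->]]; rewrite ?su_mul_neg_l; auto.
Qed.

Definition carg (z : R * R) : R := atan (snd z / fst z).

Definition polar (r t : R) : R * R := (r * cos t, r * sin t).

Lemma polar_carg z : 0 < fst z -> z = polar (sqrt (cnorm2 z)) (carg z).
Proof.
  destruct z as [x y]. unfold polar, carg, cnorm2. simpl. intro Hx.
  rewrite cos_atan, sin_atan.
  assert (E : sqrt (x * x + y * y) = x * sqrt (1 + (y / x)²)).
  { replace (x * x + y * y) with (x² * (1 + (y / x)²)) by (unfold Rsqr; field; lra).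
    rewrite sqrt_mult_alt by apply Rle_0_sqr. now rewrite sqrt_Rsqr by lra. }
  assert (0 < sqrt (1 + (y / x)²)) by (apply sqrt_lt_R0; pose proof (Rle_0_sqr (y / x)); lra).
  rewrite E. apply injective_projections; simpl; field; lra.
Qed.

Lemma cmul_polar r s r' t : cmul (polar r s) (polar r' t) = polar (r * r') (s + t).
Proof.
  unfold cmul, polar. simpl. rewrite cos_plus, sin_plus.
  apply injective_projections; simpl; ring.
Qed.

Lemma cscale_polar c r t : cscale c (polar r t) = polar (c * r) t.
Proof. unfold cscale, polar. apply injective_projections; simpl; ring. Qed.

Lemma cos_sin_inj s t : -PI < s < PI -> -PI < t < PI ->
  cos s = cos t -> sin s = sin t -> s = t.
Proof.
  intros Hs Ht Hc Hsn.
  assert (H0 : sin (s - t) = 0) by (rewrite sin_minus, Hc, Hsn; ring).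
  assert (H1 : cos (s - t) = 1).
  { rewrite cos_minus, Hc, Hsn. pose proof (sin2_cos2 t). unfold Rsqr in *. lra. }
  apply sin_eq_0_0 in H0 as [k Hk]. pose proof PI_RGT_0.
  assert (Hk2 : -2 < IZR k < 2).
  { split; apply (Rmult_lt_reg_r PI); auto; lra. }
  destruct Hk2 as [Hk1 Hk2]. apply lt_IZR in Hk1, Hk2.
  assert (k = 0 \/ k = 1 \/ k = -1)%Z as [-> | [-> | ->]] by lia; rewrite Hk in H1.
  - lra.
  - rewrite Rmult_1_l, cos_PI in H1. lra.
  - replace (IZR (-1) * PI) with (- PI) in H1 by (simpl; ring).
    rewrite cos_neg, cos_PI in H1. lra.
Qed.

Lemma polar_inj r s r' t : 0 < r -> 0 < r' -> -PI < s < PI -> -PI < t < PI ->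
  polar r s = polar r' t -> s = t.
Proof.
  unfold polar. intros Hr Hr' Hs Ht E. injection E as Ec Es.
  assert (Er : r = r').
  { pose proof (sin2_cos2 s). pose proof (sin2_cos2 t). unfold Rsqr in *.
    assert (r * r = r' * r').
    { transitivity ((r * cos s) * (r * cos s) + (r * sin s) * (r * sin s)).
      - transitivity (r * r * (sin s * sin s + cos s * cos s)); [rewrite H; ring | ring].
      - rewrite Ec, Es. transitivity (r' * r' * (sin t * sin t + cos t * cos t)); [ring|].
        rewrite H0; ring. }
    nra. }
  subst r'. apply cos_sin_inj; auto; apply (Rmult_eq_reg_l r); auto; lra.
Qed.

Lemma carg_bound z : - PI / 2 < carg z < PI / 2.
Proof. apply atan_bound. Qed.

Lemma carg_mul_eq z1 z2 z3 z4 c1 c2 :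
  0 < fst z1 -> 0 < fst z2 -> 0 < fst z3 -> 0 < fst z4 -> 0 < c1 -> 0 < c2 ->
  cscale c1 (cmul z1 z2) = cscale c2 (cmul z3 z4) -> carg z1 + carg z2 = carg z3 + carg z4.
Proof.
  intros H1 H2 H3 H4 Hc1 Hc2 E.
  rewrite (polar_carg z1), (polar_carg z2), (polar_carg z3), (polar_carg z4),
    !cmul_polar, !cscale_polar in E by assumption.
  assert (Hpos : forall z, 0 < fst z -> 0 < sqrt (cnorm2 z)).
  { intros [x y] Hx. apply sqrt_lt_R0. unfold cnorm2. simpl in *. nra. }
  eapply polar_inj; [| | | |exact E].
  - repeat apply Rmult_lt_0_compat; auto.
  - repeat apply Rmult_lt_0_compat; auto.
  - pose proof (carg_bound z1). pose proof (carg_bound z2). lra.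
  - pose proof (carg_bound z3). pose proof (carg_bound z4). lra.
Qed.

Definition omega_base (v w : su_pair) : R * R :=
  cmul (alpha (su_mul v w)) (cconj (cmul (alpha v) (alpha w))).

(* Since [omega_base] has positive real part on SU(1,1), [omega v w] is the argument
   of [alpha (v w)] minus those of [alpha v] and [alpha w], in [(-PI/2, PI/2)]. *)
Definition omega (v w : su_pair) : R := carg (omega_base v w).

Lemma omega_base_re_pos v w : su_det v = 1 -> su_det w = 1 -> 0 < fst (omega_base v w).
Proof.
  destruct v as [[x1 x2] [y1 y2]], w as [[z1 z2] [u1 u2]].
  unfold su_det, cnorm2, omega_base, su_mul, cmul, cadd, cconj; simpl. intros Hv Hw.
  set (m1 := x1 * z1 - x2 * z2). set (m2 := x1 * z2 + x2 * z1).
  set (s1 := y1 * u1 + y2 * u2). set (s2 := y2 * u1 - y1 * u2).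
  set (A := x1 * x1 + x2 * x2). set (B := z1 * z1 + z2 * z2).
  assert (EM : m1 * m1 + m2 * m2 = A * B) by (unfold m1, m2, A, B; ring).
  assert (ES : s1 * s1 + s2 * s2 = (A - 1) * (B - 1)).
  { replace (A - 1) with (y1 * y1 + y2 * y2) by (unfold A; lra).
    replace (B - 1) with (u1 * u1 + u2 * u2) by (unfold B; lra).
    unfold s1, s2; ring. }
  (* Cauchy-Schwarz: [|s.m|^2 <= |s|^2 |m|^2 = (A-1)(B-1) A B < (A B)^2]. *)
  assert (CS : (s1 * m1 + s2 * m2) * (s1 * m1 + s2 * m2) <= (A - 1) * (B - 1) * (A * B)).
  { rewrite <- EM, <- ES. pose proof (Rle_0_sqr (s1 * m2 - s2 * m1)). unfold Rsqr in *. nra. }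
  assert (HA : 1 <= A) by (unfold A; nra). assert (HB : 1 <= B) by (unfold B; nra).
  match goal with |- 0 < ?e => replace e with (A * B + (s1 * m1 + s2 * m2)) end.
  2: { rewrite <- EM. unfold s1, s2, m1, m2. ring. }
  nra.
Qed.

Lemma omega_base_neg_l v w : omega_base (su_neg v) w = omega_base v w.
Proof. unfold omega_base. su_ring. Qed.
Lemma omega_base_neg_r v w : omega_base v (su_neg w) = omega_base v w.
Proof. unfold omega_base. su_ring. Qed.

Lemma omega_normalize_l v w : su_det v = 1 -> omega (normalize v) w = omega v w.
Proof.
  intro H. destruct (normalize_spec v H) as [_ [-> | ->]]; unfold omega;
    now rewrite ?omega_base_neg_l.
Qed.

Lemma omega_normalize_r v w : su_det w = 1 -> omega v (normalize w) = omega v w.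
Proof.
  intro H. destruct (normalize_spec w H) as [_ [-> | ->]]; unfold omega;
    now rewrite ?omega_base_neg_r.
Qed.

Lemma omega_of_real_base v w : snd (omega_base v w) = 0 -> omega v w = 0.
Proof. intro H. unfold omega, carg. rewrite H, Rdiv_0_l. apply atan_0. Qed.

Lemma omega_1l v : omega su_one v = 0.
Proof. apply omega_of_real_base. unfold omega_base. rewrite su_mul_1l. su_ring. Qed.
Lemma omega_1r v : omega v su_one = 0.
Proof. apply omega_of_real_base. unfold omega_base. rewrite su_mul_1r. su_ring. Qed.
Lemma omega_inv_l v : su_det v = 1 -> omega (su_inv v) v = 0.
Proof.
  intro H. apply omega_of_real_base. unfold omega_base. rewrite su_mul_inv_l by auto. su_ring.
Qed.
Lemma omega_inv_r v : su_det v = 1 -> omega v (su_inv v) = 0.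
Proof.
  intro H. apply omega_of_real_base. unfold omega_base. rewrite su_mul_inv_r by auto. su_ring.
Qed.

Lemma omega_cocycle x y z : su_det x = 1 -> su_det y = 1 -> su_det z = 1 ->
  omega x y + omega (su_mul x y) z = omega y z + omega x (su_mul y z).
Proof.
  intros Hx Hy Hz.
  pose proof (su_det_mul1 x y Hx Hy) as Hxy. pose proof (su_det_mul1 y z Hy Hz) as Hyz.
  apply (carg_mul_eq _ _ _ _ (cnorm2 (alpha (su_mul y z))) (cnorm2 (alpha (su_mul x y))));
    auto using omega_base_re_pos.
  - pose proof (su_det1_alpha _ Hyz). lra.
  - pose proof (su_det1_alpha _ Hxy). lra.
  - unfold omega_base. rewrite <- su_mul_assoc.
    generalize (alpha x) (alpha y) (alpha z) (alpha (su_mul x y)) (alpha (su_mul y z))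
      (alpha (su_mul x (su_mul y z))).
    intros [] [] [] [] [] []. unfold cscale, cmul, cconj, cnorm2; simpl.
    apply injective_projections; simpl; ring.
Qed.

Record ext_elt := Ext { base : su_pair; height : R;
                        base_det : su_det base = 1; base_normalized : normalized base }.

Lemma ext_elt_eq (x y : ext_elt) : base x = base y -> height x = height y -> x = y.
Proof.
  destruct x as [v t d i], y as [v' t' d' i']; simpl; intros <- <-.
  f_equal; apply proof_irrelevance.
Qed.

Lemma normalize_normalized v : su_det v = 1 -> normalized (normalize v).
Proof. intro H. apply (normalize_spec v H). Qed.

Definition ext_mul (x y : ext_elt) : ext_elt :=
  let H := su_det_mul1 _ _ (base_det x) (base_det y) in
  Ext (normalize (su_mul (base x) (base y))) (height x + height y + omega (base x) (base y))
      (normalize_det1 _ H) (normalize_normalized _ H).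

Definition ext_inv (x : ext_elt) : ext_elt :=
  let H := su_det_inv1 _ (base_det x) in
  Ext (normalize (su_inv (base x))) (- height x) (normalize_det1 _ H) (normalize_normalized _ H).

Lemma normalized_one : normalized su_one.
Proof. left. simpl. lra. Qed.

Definition ext_one : ext_elt := Ext su_one 0 su_det_one normalized_one.

Definition ext_group : Group.
Proof.
  refine (Build_Group ext_elt ext_mul ext_inv ext_one _ _ _ _ _).
  - intros [X tx Dx Ix] [Y ty Dy Iy] [Z tz Dz Iz]. apply ext_elt_eq; simpl.
    + rewrite normalize_mul_r, normalize_mul_l, su_mul_assoc; auto using su_det_mul1.
    + rewrite omega_normalize_r, omega_normalize_l by auto using su_det_mul1.
      pose proof (omega_cocycle X Y Z Dx Dy Dz). lra.
  - intros [X tx Dx Ix]. apply ext_elt_eq; simpl.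
    + rewrite su_mul_1l. now apply normalize_id.
    + rewrite omega_1l. ring.
  - intros [X tx Dx Ix]. apply ext_elt_eq; simpl.
    + rewrite su_mul_1r. now apply normalize_id.
    + rewrite omega_1r. ring.
  - intros [X tx Dx Ix]. apply ext_elt_eq; simpl.
    + rewrite normalize_mul_l, su_mul_inv_l by auto using su_det_inv1.
      apply normalize_id, normalized_one.
    + rewrite omega_normalize_l, omega_inv_l by auto using su_det_inv1. ring.
  - intros [X tx Dx Ix]. apply ext_elt_eq; simpl.
    + rewrite normalize_mul_r, su_mul_inv_r by auto using su_det_inv1.
      apply normalize_id, normalized_one.
    + rewrite omega_normalize_r, omega_inv_r by auto using su_det_inv1. ring.
Defined.

Lemma height_defect (g h : ext_group) :
  Rabs (height g + height h - height (gmul ext_group g h)) <= PI / 2.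
Proof.
  simpl. replace (height g + height h - (height g + height h + omega (base g) (base h)))
    with (- omega (base g) (base h)) by ring.
  rewrite Rabs_Ropp. apply Rabs_le. pose proof (carg_bound (omega_base (base g) (base h))).
  unfold omega. lra.
Qed.

(** * Divisibility of the extension *)

(* [(x, y)] stands for [x + y X] in the algebra [R[X] / (X^2 - 2 tau X + 1)]. *)
Definition pencil_mul (tau : R) (u v : R * R) : R * R :=
  (fst u * fst v - snd u * snd v, fst u * snd v + snd u * fst v + 2 * tau * snd u * snd v).

Fixpoint pencil_pow (tau : R) (u : R * R) (k : nat) : R * R :=
  match k with O => (1, 0) | S k => pencil_mul tau u (pencil_pow tau u k) end.

Definition pencil_norm (tau : R) (u : R * R) : R :=
  fst u * fst u + 2 * tau * fst u * snd u + snd u * snd u.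

Definition pencil_eval_real (r : R) (u : R * R) : R := fst u + snd u * r.

Lemma pencil_eval_real_pow tau r u k : r * r = 2 * tau * r - 1 ->
  pencil_eval_real r (pencil_pow tau u k) = pencil_eval_real r u ^ k.
Proof.
  intro Hr. induction k; simpl; [unfold pencil_eval_real; simpl; ring|].
  rewrite <- IHk. destruct u as [x y], (pencil_pow tau (x, y) k) as [x' y'].
  unfold pencil_eval_real, pencil_mul; simpl.
  transitivity (x * x' + (x * y' + y * x') * r + y * y' * (2 * tau * r - 1));
    [ring | rewrite <- Hr; ring].
Qed.

Definition pencil_eval_complex (c s : R) (u : R * R) : R * R := (fst u + snd u * c, snd u * s).

Fixpoint cpow (z : R * R) (k : nat) : R * R :=
  match k with O => (1, 0) | S k => cmul z (cpow z k) end.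

Lemma pencil_eval_complex_pow c s u k : c * c + s * s = 1 ->
  pencil_eval_complex c s (pencil_pow c u k) = cpow (pencil_eval_complex c s u) k.
Proof.
  intro H. induction k; simpl.
  - unfold pencil_eval_complex; simpl. apply injective_projections; simpl; ring.
  - rewrite <- IHk. destruct u as [x y], (pencil_pow c (x, y) k) as [x' y'].
    unfold pencil_eval_complex, pencil_mul, cmul; simpl.
    apply injective_projections; simpl; [|ring].
    transitivity (x * x' + (x * y' + y * x') * c + y * y' * (2 * c * c - (c * c + s * s)));
      [rewrite H|]; ring.
Qed.

Lemma cpow_polar1 a k : cpow (polar 1 a) k = polar 1 (INR k * a).
Proof.
  induction k; cbn [cpow].
  - unfold polar. simpl. rewrite Rmult_0_l, cos_0, sin_0. apply injective_projections; simpl; ring.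
  - rewrite IHk, cmul_polar, S_INR. f_equal; ring.
Qed.

Lemma pencil_root_elliptic tau n : 0 <= tau < 1 -> (0 < n)%nat ->
  exists u, pencil_norm tau u = 1 /\ pencil_pow tau u n = (0, 1).
Proof.
  intros Ht Hn. pose proof (lt_0_INR n Hn) as HnR.
  set (th := acos tau). set (c := cos th). set (s := sin th).
  assert (Hc : c = tau) by (apply cos_acos; lra).
  assert (Hs0 : 0 < s).
  { unfold s, th. rewrite sin_acos by lra. apply sqrt_lt_R0. unfold Rsqr. nra. }
  assert (Hcs : c * c + s * s = 1).
  { unfold c, s. pose proof (sin2_cos2 th). unfold Rsqr in *. lra. }
  set (ph := th / INR n). set (u := (sin (th - ph) / s, sin ph / s)).
  assert (Hu : pencil_eval_complex c s u = polar 1 ph).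
  { unfold pencil_eval_complex, polar; simpl. rewrite sin_minus. fold c s.
    apply injective_projections; simpl; field; lra. }
  exists u. split.
  - pose proof (sin2_cos2 ph). unfold Rsqr in *.
    transitivity (cnorm2 (pencil_eval_complex c s u)).
    + rewrite <- Hc. unfold pencil_norm, cnorm2, pencil_eval_complex; cbn [fst snd].
      transitivity ((fst u + snd u * c) * (fst u + snd u * c) + snd u * s * (snd u * s)
                    + snd u * snd u * (1 - (c * c + s * s))); [ring | rewrite Hcs; ring].
    + rewrite Hu. unfold cnorm2, polar; simpl. lra.
  - assert (E : pencil_eval_complex c s (pencil_pow tau u n) = pencil_eval_complex c s (0, 1)).
    { rewrite <- Hc, pencil_eval_complex_pow, Hu, cpow_polar1 by assumption.
      unfold ph. replace (INR n * (th / INR n)) with th by (field; lra).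
      unfold polar, pencil_eval_complex; simpl. fold c s.
      apply injective_projections; simpl; ring. }
    destruct (pencil_pow tau u n) as [p q]. unfold pencil_eval_complex in E; simpl in E.
    injection E as E1 E2. assert (q = 1) by (apply (Rmult_eq_reg_r s); lra). subst q.
    f_equal. lra.
Qed.

Lemma pencil_root_parabolic n : (0 < n)%nat ->
  exists u, pencil_norm 1 u = 1 /\ pencil_pow 1 u n = (0, 1).
Proof.
  intro Hn. pose proof (lt_0_INR n Hn) as HnR.
  exists (1 - 1 / INR n, 1 / INR n). split.
  - unfold pencil_norm; simpl. field. lra.
  - assert (Hk : forall k,
      pencil_pow 1 (1 - 1 / INR n, 1 / INR n) k = (1 - INR k / INR n, INR k / INR n)).
    { induction k; cbn [pencil_pow].
      - simpl. apply injective_projections; simpl; field; lra.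
      - rewrite IHk, S_INR. unfold pencil_mul. apply injective_projections; simpl; field; lra. }
    rewrite Hk. apply injective_projections; simpl; field; lra.
Qed.

Lemma pencil_root_hyperbolic tau n : 1 < tau -> (0 < n)%nat ->
  exists u, pencil_norm tau u = 1 /\ pencil_pow tau u n = (0, 1).
Proof.
  intros Ht Hn. pose proof (lt_0_INR n Hn) as HnR.
  set (q := sqrt (tau * tau - 1)).
  assert (Hq : 0 < q) by (apply sqrt_lt_R0; nra).
  assert (Hq2 : q * q = tau * tau - 1) by (apply sqrt_sqrt; nra).
  set (l := tau + q). set (l' := tau - q).
  assert (Hl : 1 < l) by (unfold l; lra).
  assert (Hll : l * l' = 1) by (unfold l, l'; nra).
  assert (R1 : l * l = 2 * tau * l - 1) by (unfold l; nra).
  assert (R2 : l' * l' = 2 * tau * l' - 1) by (unfold l'; nra).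
  set (mu := Rpower l (/ INR n)).
  assert (Hmu : 0 < mu) by apply exp_pos.
  assert (Hmun : mu ^ n = l).
  { unfold mu. rewrite <- Rpower_pow by apply exp_pos. rewrite Rpower_mult.
    replace (/ INR n * INR n) with 1 by (field; lra). apply Rpower_1. lra. }
  set (y := (mu - / mu) / (l - l')). set (x := mu - y * l).
  assert (M1 : pencil_eval_real l (x, y) = mu) by (unfold pencil_eval_real, x; simpl; ring).
  assert (M2 : pencil_eval_real l' (x, y) = / mu).
  { unfold pencil_eval_real, x, y; simpl. field. split; unfold l, l'; lra. }
  exists (x, y). split.
  - transitivity (pencil_eval_real l (x, y) * pencil_eval_real l' (x, y)).
    + unfold pencil_norm, pencil_eval_real; simpl.
      transitivity (x * x + x * y * (l + l') + y * y * (l * l'));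
        [rewrite Hll; unfold l, l'|]; ring.
    + rewrite M1, M2. field. lra.
  - assert (E1 : pencil_eval_real l (pencil_pow tau (x, y) n) = l)
      by (rewrite pencil_eval_real_pow, M1; auto).
    assert (E2 : pencil_eval_real l' (pencil_pow tau (x, y) n) = l').
    { rewrite pencil_eval_real_pow, M2, pow_inv, Hmun by assumption.
      apply (Rmult_eq_reg_l l); [rewrite Hll; field|]; lra. }
    destruct (pencil_pow tau (x, y) n) as [p r]. unfold pencil_eval_real in E1, E2; simpl in E1, E2.
    assert (r = 1) by (apply (Rmult_eq_reg_r (l - l')); unfold l, l' in *; lra).
    subst r. f_equal. lra.
Qed.

Lemma pencil_root tau n : 0 <= tau -> (0 < n)%nat ->
  exists u, pencil_norm tau u = 1 /\ pencil_pow tau u n = (0, 1).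
Proof.
  intros Ht Hn. destruct (Rlt_le_dec tau 1) as [H1|H1].
  - apply pencil_root_elliptic; auto.
  - destruct (Req_dec tau 1) as [-> | Ht1].
    + now apply pencil_root_parabolic.
    + apply pencil_root_hyperbolic; auto. lra.
Qed.

Fixpoint su_pow (g : su_pair) (k : nat) : su_pair :=
  match k with O => su_one | S k => su_mul g (su_pow g k) end.

Lemma su_det_pow1 g k : su_det g = 1 -> su_det (su_pow g k) = 1.
Proof. intro H. induction k; simpl; auto using su_det_one, su_det_mul1. Qed.

Lemma su_pow_neg g k :
  su_pow (su_neg g) k = su_pow g k \/ su_pow (su_neg g) k = su_neg (su_pow g k).
Proof.
  induction k; simpl; [now left|].
  destruct IHk as [-> | ->]; rewrite su_mul_neg_l; [now right|].
  left. now rewrite su_mul_neg_r, su_neg_neg.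
Qed.

Lemma normalize_pow_normalize g k : su_det g = 1 ->
  normalize (su_pow (normalize g) k) = normalize (su_pow g k).
Proof.
  intro H. destruct (normalize_spec g H) as [_ [-> | ->]]; [reflexivity|].
  apply normalize_sign; auto using su_det_pow1, su_pow_neg.
Qed.

Lemma ext_pow_base (e : ext_group) k :
  base (gpow_nat ext_group e k) = normalize (su_pow (base e) k).
Proof.
  induction k; simpl; [symmetry; apply normalize_id, normalized_one|].
  rewrite IHk. apply normalize_mul_r; auto using base_det, su_det_pow1.
Qed.

(* Holds because [omega] only depends on the bases. *)
Lemma ext_pow_height g t t' Dg Ng k :
  height (gpow_nat ext_group (Ext g t Dg Ng) k)
  = INR k * (t - t') + height (gpow_nat ext_group (Ext g t' Dg Ng) k).
Proof.
  induction k; [simpl; ring|].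
  change (gpow_nat ext_group ?e (S k)) with (ext_mul e (gpow_nat ext_group e k)).
  unfold ext_mul. cbn [height base]. rewrite IHk, S_INR, !ext_pow_base. simpl. ring.
Qed.

(* [su_pencil x y h = x + y h]; these commute and multiply like the [pencil_mul] algebra
   with [tau = Re (alpha h)], by Cayley-Hamilton. *)
Definition su_pencil (x y : R) (h : su_pair) : su_pair :=
  SU (x + y * fst (alpha h), y * snd (alpha h)) (y * fst (beta h), y * snd (beta h)).

Lemma su_pencil_mul x y x' y' h :
  su_mul (su_pencil x y h) (su_pencil x' y' h) =
  su_pencil (x * x' - su_det h * y * y') (x * y' + y * x' + 2 * fst (alpha h) * y * y') h.
Proof. su_ring. Qed.

Lemma su_pencil_pow x y h k : su_det h = 1 ->
  su_pow (su_pencil x y h) k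
  = let u := pencil_pow (fst (alpha h)) (x, y) k in su_pencil (fst u) (snd u) h.
Proof.
  intro H. induction k; simpl.
  - su_ring.
  - rewrite IHk, su_pencil_mul, H. f_equal; simpl; ring.
Qed.

Lemma su_det_pencil x y h :
  su_det h = 1 -> su_det (su_pencil x y h) = pencil_norm (fst (alpha h)) (x, y).
Proof. destruct h as [[a b] [c d]]. unfold su_pencil, su_det, cnorm2, pencil_norm; simpl. nra. Qed.

Lemma su_pencil_01 h : su_pencil 0 1 h = h.
Proof. su_ring. Qed.

Lemma ext_group_divisible : divisible ext_group.
Proof.
  intros [h s Dh Nh] N.
  assert (Ht : 0 <= fst (alpha h)) by (destruct Nh as [I|[I _]]; lra).
  destruct (pencil_root _ (S N) Ht ltac:(lia)) as [[x y] [Hn Hp]].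
  assert (Dg0 : su_det (su_pencil x y h) = 1) by now rewrite su_det_pencil.
  set (g := normalize (su_pencil x y h)).
  pose proof (normalize_det1 _ Dg0) as Dg. pose proof (normalize_normalized _ Dg0) as Ng.
  set (c := height (gpow_nat ext_group (Ext g 0 Dg Ng) (S N))).
  pose proof (lt_0_INR (S N) ltac:(lia)).
  exists (Ext g ((s - c) / INR (S N)) Dg Ng). apply ext_elt_eq.
  - rewrite ext_pow_base. simpl base. unfold g.
    rewrite normalize_pow_normalize, su_pencil_pow, Hp, su_pencil_01 by assumption.
    now apply normalize_id.
  - rewrite (ext_pow_height g _ 0). fold c. simpl height. field. lra.
Qed.

(** * Elements on which the homogenized height is not additive *)

Local Notation ext_homogenization := (homogenization ext_group height (PI / 2) height_defect).

(* For fixed [b], these form a one-parameter hyperbolic subgroup on which [omega] vanishes. *)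
Definition ray (b : R * R) (v : su_pair) : Prop :=
  snd (alpha v) = 0 /\ 0 < fst (alpha v) /\ exists s, beta v = cscale s b.

Lemma ray_mul b v w : su_det v = 1 -> su_det w = 1 -> ray b v -> ray b w ->
  ray b (normalize (su_mul v w)) /\ omega v w = 0.
Proof.
  intros Dv Dw [Hv2 [Hv1 [s Hs]]] [Hw2 [Hw1 [s' Hs']]].
  destruct v as [[a a2] bv], w as [[a' a2'] bw]. cbn [alpha beta fst snd] in *. subst.
  pose proof (omega_base_re_pos _ _ Dv Dw) as Hpos.
  set (B := cnorm2 b).
  assert (Hm : su_mul (SU (a, 0) (cscale s b)) (SU (a', 0) (cscale s' b)) =
               SU (a * a' + s * s' * B, 0) (cscale (a * s' + s * a') b)).
  { unfold su_mul, cmul, cadd, cconj, cscale, B, cnorm2; simpl.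
    apply (f_equal2 SU); apply injective_projections; simpl; ring. }
  unfold omega_base in Hpos. rewrite Hm in Hpos. unfold cmul, cconj in Hpos. simpl in Hpos.
  assert (Hr : 0 < a * a' + s * s' * B).
  { assert (0 < a * a') by now apply Rmult_lt_0_compat. nra. }
  split.
  - rewrite Hm, normalize_id by (left; simpl; lra).
    repeat split; simpl; auto. eauto.
  - apply omega_of_real_base. unfold omega_base. rewrite Hm. simpl. ring.
Qed.

Lemma ray_pow b (e : ext_group) k : ray b (base e) -> height e = 0 ->
  ray b (base (gpow_nat ext_group e k)) /\ height (gpow_nat ext_group e k) = 0.
Proof.
  intros HF Ht. induction k as [|k [IH1 IH2]].
  - repeat split; simpl; try lra. exists 0. unfold cscale. f_equal; ring.
  - change (gpow_nat ext_group e (S k)) with (ext_mul e (gpow_nat ext_group e k)).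
    destruct (ray_mul b _ _ (base_det _) (base_det _) HF IH1) as [F1 F2].
    unfold ext_mul; simpl. split; auto. rewrite Ht, IH2, F2. ring.
Qed.

Lemma ext_homogenization_ray b (e : ext_group) :
  ray b (base e) -> height e = 0 -> ext_homogenization e = 0.
Proof.
  intros HF Ht. apply homogenization_of_linear_powers. intro n.
  rewrite (proj2 (ray_pow b e n HF Ht)). ring.
Qed.

Definition diagonal (v : su_pair) : Prop := beta v = (0, 0).

Lemma normalize_diagonal v : diagonal v -> diagonal (normalize v).
Proof.
  unfold diagonal, normalize. intro H.
  repeat destruct Rlt_dec; simpl; rewrite ?H; auto. all: unfold copp; simpl; f_equal; ring.
Qed.

Lemma diagonal_mul v w : diagonal v -> diagonal w ->
  diagonal (normalize (su_mul v w)) /\ omega v w = 0.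
Proof.
  destruct v as [a bv], w as [c bw]. unfold diagonal; simpl. intros -> ->.
  assert (Hm : su_mul (SU a (0, 0)) (SU c (0, 0)) = SU (cmul a c) (0, 0)).
  { unfold su_mul, cmul, cadd, cconj; simpl.
    apply (f_equal2 SU); apply injective_projections; simpl; ring. }
  split.
  - rewrite Hm. now apply normalize_diagonal.
  - apply omega_of_real_base. unfold omega_base. rewrite Hm. unfold cmul, cconj; simpl. ring.
Qed.

Lemma diagonal_pow (e : ext_group) k : diagonal (base e) ->
  diagonal (base (gpow_nat ext_group e k)) /\ height (gpow_nat ext_group e k) = INR k * height e.
Proof.
  intros HD. induction k as [|k [IH1 IH2]].
  - split; [reflexivity | simpl; ring].
  - change (gpow_nat ext_group e (S k)) with (ext_mul e (gpow_nat ext_group e k)).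
    destruct (diagonal_mul _ _ HD IH1) as [F1 F2].
    unfold ext_mul; cbn [height base]. split; auto. rewrite IH2, F2, S_INR. ring.
Qed.

Lemma ext_homogenization_diagonal (e : ext_group) :
  diagonal (base e) -> ext_homogenization e = height e.
Proof.
  intros HD. apply homogenization_of_linear_powers. intro n. apply (diagonal_pow e n HD).
Qed.

Definition v1 : su_pair := SU (5/4, 0) (3/4, 0).
Definition v2 : su_pair := SU (5/4, 0) (0, 3/4).
Definition v12 : su_pair := su_mul v1 v2.

Lemma v1_det : su_det v1 = 1.
Proof. unfold su_det, cnorm2, v1; simpl. field. Qed.
Lemma v2_det : su_det v2 = 1.
Proof. unfold su_det, cnorm2, v2; simpl. field. Qed.
Lemma v1_ray : ray (1, 0) v1.
Proof. repeat split; simpl; try lra. exists (3/4). unfold cscale; simpl. f_equal; ring. Qed.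
Lemma v2_ray : ray (0, 1) v2.
Proof. repeat split; simpl; try lra. exists (3/4). unfold cscale; simpl. f_equal; ring. Qed.

Lemma v12_alpha : alpha v12 = (25/16, -9/16).
Proof.
  unfold v12, su_mul, v1, v2, cmul, cadd, cconj; simpl.
  apply injective_projections; simpl; field.
Qed.

Lemma omega_v1_v2 : omega v1 v2 <> 0.
Proof.
  assert (E : omega_base v1 v2 = (625/256, -225/256)).
  { unfold omega_base. fold v12. rewrite v12_alpha. unfold v1, v2, cmul, cconj; simpl.
    apply injective_projections; simpl; field. }
  unfold omega, carg. rewrite E. simpl. intro H.
  apply (f_equal tan) in H. rewrite tan_atan, tan_0 in H. lra.
Qed.

(* [v3] undoes the off-diagonal part of [v12] while keeping [alpha] real and positive. *)
Definition r12 : R := sqrt (cnorm2 (alpha v12)).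
Definition b3 : R * R := copp (cscale (/ r12) (cmul (beta v12) (cconj (alpha v12)))).
Definition v3 : su_pair := SU (r12, 0) b3.

Lemma r12_pos : 0 < r12.
Proof. unfold r12. apply sqrt_lt_R0. rewrite v12_alpha. unfold cnorm2; simpl. lra. Qed.

Lemma r12_sqr : r12 * r12 = cnorm2 (alpha v12).
Proof. apply sqrt_sqrt, cnorm2_nonneg. Qed.

Lemma v3_det : su_det v3 = 1.
Proof.
  pose proof (su_det_mul1 _ _ v1_det v2_det) as H. fold v12 in H.
  pose proof r12_pos. pose proof r12_sqr as Hs.
  unfold v3, b3, su_det in *. destruct v12 as [[a1 a2] [c1 c2]].
  unfold cnorm2, copp, cscale, cmul, cconj in *; simpl in *.
  rewrite <- H. transitivity (r12 * r12 - (c1 * c1 + c2 * c2) * (a1 * a1 + a2 * a2) / (r12 * r12)).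
  - field. lra.
  - rewrite Hs. field. rewrite <- Hs. nra.
Qed.

Lemma v3_ray : ray b3 v3.
Proof.
  repeat split; simpl; [apply r12_pos|].
  exists 1. unfold cscale. now rewrite !Rmult_1_l, <- surjective_pairing.
Qed.

Lemma v12_v3_diagonal : diagonal (su_mul v12 v3).
Proof.
  pose proof r12_pos. pose proof r12_sqr as Hs.
  unfold diagonal, v3, b3 in *. destruct v12 as [[a1 a2] [c1 c2]].
  unfold su_mul, cnorm2, copp, cscale, cmul, cadd, cconj in *; simpl in *.
  apply injective_projections; simpl.
  - transitivity (c1 * (r12 * r12 - (a1 * a1 + a2 * a2)) / r12); [field; lra|].
    rewrite Hs. field. lra.
  - transitivity (c2 * (r12 * r12 - (a1 * a1 + a2 * a2)) / r12); [field; lra|].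
    rewrite Hs. field. lra.
Qed.

Lemma omega_v12_v3 : omega v12 v3 = 0.
Proof.
  apply omega_of_real_base. pose proof r12_pos.
  unfold omega_base, v3, b3. destruct v12 as [[a1 a2] [c1 c2]].
  unfold su_mul, copp, cscale, cmul, cadd, cconj; simpl. field. lra.
Qed.

Lemma normalized_of_re_pos v : 0 < fst (alpha v) -> normalized v.
Proof. now left. Qed.

Definition e1 : ext_group := Ext v1 0 v1_det (normalized_of_re_pos v1 ltac:(simpl; lra)).
Definition e2 : ext_group := Ext v2 0 v2_det (normalized_of_re_pos v2 ltac:(simpl; lra)).
Definition e3 : ext_group := Ext v3 0 v3_det (normalized_of_re_pos v3 r12_pos).

Lemma ext_homogenization_e123 : ext_homogenization (gmul ext_group e1 (gmul ext_group e2 e3)) <> 0.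
Proof.
  assert (N12 : normalized v12) by (apply normalized_of_re_pos; rewrite v12_alpha; simpl; lra).
  rewrite gmul_assoc, ext_homogenization_diagonal; simpl; fold v12; rewrite (normalize_id v12 N12).
  - rewrite omega_v12_v3. replace (0 + 0 + omega v1 v2 + 0 + 0) with (omega v1 v2) by ring.
    apply omega_v1_v2.
  - apply normalize_diagonal, v12_v3_diagonal.
Qed.

Theorem theoremA :
  exists G : Group,
    countable_group G /\
    (forall (m : nat) (w : word), (1 <= m)%nat -> word_in m w ->
        ~ in_commutator_subgroup m w -> word_map_surjective G m w) /\
    Q_mod_Hom_infinite_dim G.
Proof.
  set (G := copies_group ext_group ext_group_divisible e1 e2 e3).
  exists G. split; [|split].
  - apply root_closure_countable.
  - intros m w _. apply word_map_surjective_of_divisible, root_closure_divisible, some_root_spec.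
  - apply (copies_group_Q_mod_Hom_infinite_dim ext_group height (PI / 2) height_defect).
    + apply (ext_homogenization_ray (1, 0)); [apply v1_ray | reflexivity].
    + apply (ext_homogenization_ray (0, 1)); [apply v2_ray | reflexivity].
    + apply (ext_homogenization_ray b3); [apply v3_ray | reflexivity].
    + apply ext_homogenization_e123.
Qed.
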